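(* Let $d_E$ be the Euclidean metric on $\mathbb R^n$, $\delta>0$, and let $w:\mathbb R^n\to\mathbb R^n$ be a contraction with respect to $d_E$ with contractivity factor $\lambda<\tfrac12$ and fixed point $x_f=\tilde o\in\mathcal D^n(\delta)$. Then the minimal absorbing set of the $\delta$-roundoff $\tilde w$ of $w$ (in $\mathcal D^n(\delta)$) is $\mathcal M[\tilde w]=\{\tilde o\}$.
   Context: For $m\in\mathbb Z^n$, $C_\delta(m)=\prod_{j=1}^n[(m_j-\tfrac12)\delta,(m_j+\tfrac12)\delta)$; $\mathcal D^n(\delta)=\{\delta m:m\in\mathbb Z^n\}\subset\mathbb R^n$. The $\delta$-roundoff of $x\in\mathbb R^n$ is $\tilde x=\delta m$ where $x\in C_\delta(m)$; the $\delta$-roundoff of $w$ is $\tilde w(\tilde x)=\widetilde{w(\tilde x)}$ on $\mathcal D^n(\delta)$. A set $\Lambda\subset\mathcal D^n(\delta)$ is absorbing for $\tilde w$ if for every $\tilde x\in\mathcal D^n(\delta)$ there is $N$ with $\tilde w^{\circ i}(\tilde x)\in\Lambda$ for all $i\ge N$; the minimal absorbing set $\mathcal M[\tilde w]$ is the intersection of all absorbing sets (which, for roundoffs of contractions, is itself absorbing). *)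

From mathcomp Require Import all_boot all_order all_algebra.
From mathcomp Require Import all_classical all_reals.
From mathcomp Require Import lra.
Set Implicit Arguments. Unset Strict Implicit. Unset Printing Implicit Defensive.
Import Order.TTheory GRing.Theory Num.Theory.
Local Open Scope ring_scope.
Local Open Scope classical_set_scope.

Definition dE (R : realType) (n : nat) (x y : 'rV[R]_n) : R :=
  Num.sqrt (\sum_(j < n) (x ord0 j - y ord0 j) ^+ 2).

Definition contraction (R : realType) (n : nat) (w : 'rV[R]_n -> 'rV[R]_n)
  (lambda : R) : Prop :=
  0 <= lambda < 1 /\ forall x y, dE (w x) (w y) <= lambda * dE x y.

Definition grid (R : realType) (n : nat) (delta : R) : set 'rV[R]_n :=
  [set x | exists m : 'I_n -> int, forall j, x ord0 j = delta * (m j)%:~R].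

Definition cell (R : realType) (n : nat) (delta : R) (m : 'I_n -> int)
  : set 'rV[R]_n :=
  [set x | forall j, ((m j)%:~R - 2^-1) * delta <= x ord0 j
                     /\ x ord0 j < ((m j)%:~R + 2^-1) * delta].

(* the delta-roundoff of x: delta m where x lies in C_delta(m);
   coordinatewise m_j = floor (x_j / delta + 1/2) *)
Definition roundoff (R : realType) (n : nat) (delta : R) (x : 'rV[R]_n)
  : 'rV[R]_n :=
  \row_j (delta * (Num.floor (x ord0 j / delta + 2^-1))%:~R).

Definition roundoff_map (R : realType) (n : nat) (delta : R)
  (w : 'rV[R]_n -> 'rV[R]_n) : 'rV[R]_n -> 'rV[R]_n :=
  fun x => roundoff delta (w x).

Definition absorbing (R : realType) (n : nat) (delta : R)
  (f : 'rV[R]_n -> 'rV[R]_n) (L : set 'rV[R]_n) : Prop :=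
  L `<=` grid delta /\
  forall x, grid delta x ->
    exists N : nat, forall i : nat, (N <= i)%N -> L (iter i f x).

Definition minimal_absorbing (R : realType) (n : nat) (delta : R)
  (f : 'rV[R]_n -> 'rV[R]_n) : set 'rV[R]_n :=
  \bigcap_(L in absorbing delta f) L.

Lemma roundoff_cell_spec (R : realType) (n : nat) (delta : R) (x : 'rV[R]_n) :
  0 < delta ->
  exists m : 'I_n -> int, cell delta m x /\
    forall j, roundoff delta x ord0 j = delta * (m j)%:~R.
Proof.
move=> d0; exists (fun j => Num.floor (x ord0 j / delta + 2^-1)); split; last first.
  by move=> j; rewrite mxE.
move=> j; set y := x ord0 j / delta + 2^-1.
have := floor_le y; have := floorD1_gt y; rewrite /y => h1 h2; split.
- have : ((Num.floor y)%:~R - 2^-1) <= x ord0 j / delta by rewrite /y; lra.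
  by rewrite ler_pdivlMr.
- have : x ord0 j / delta < ((Num.floor y)%:~R + 2^-1).
    by move: h1; rewrite /y intrD; lra.
  by rewrite ltr_pdivrMr.
Qed.

From mathcomp Require Import all_boot all_order all_algebra.
From mathcomp Require Import all_classical all_reals.
From mathcomp Require Import lra zify.
Set Implicit Arguments. Unset Strict Implicit. Unset Printing Implicit Defensive.
Import Order.TTheory GRing.Theory Num.Theory.
Local Open Scope ring_scope.
Local Open Scope classical_set_scope.

(* Rounding a point to the lattice at most doubles its distance to any lattice
   point g: if the roundoff is not g, the point lies outside the cell of g, so
   it is at distance >= delta/2 from g, and rounding moves it by <= delta/2.
   Hence, measured by the squared distance to the fixed point o, one step of
   the roundoff map contracts by the factor 4 lambda^2 < 1.  Distinct lattice
   points are at distance >= delta, so every lattice orbit loses at least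
   (1 - 4 lambda^2) delta^2 of squared distance per step until it hits o, and
   stays there because o is fixed. *)

Section SquaredDistance.
Variables (R : realType) (n : nat).

Definition sqdist (x y : 'rV[R]_n) : R :=
  \sum_(j < n) (x ord0 j - y ord0 j) ^+ 2.

Lemma sqdist_ge0 (x y : 'rV[R]_n) : 0 <= sqdist x y.
Proof. by apply: sumr_ge0 => j _; rewrite sqr_ge0. Qed.

Lemma contraction_sqdist (w : 'rV[R]_n -> 'rV[R]_n) (lambda : R) x y :
  contraction w lambda -> sqdist (w x) (w y) <= lambda ^+ 2 * sqdist x y.
Proof.
move=> [/andP[lambda_ge0 _] /(_ x y)]; rewrite /dE -!/(sqdist _ _) => le_wxy.
rewrite -(sqr_sqrtr (sqdist_ge0 (w x) (w y))) -(sqr_sqrtr (sqdist_ge0 x y)).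
by rewrite -exprMn ler_pXn2r // ?nnegrE ?sqrtr_ge0 // mulr_ge0 // sqrtr_ge0.
Qed.

End SquaredDistance.

Lemma sqr_floor_half_sub_le (R : archiRealFieldType) (s : R) (a : int) :
  ((Num.floor (s + 2^-1) - a)%:~R : R) ^+ 2 <= 4 * (s - a%:~R) ^+ 2.
Proof.
have lo := floorD1_gt (s + 2^-1); have hi := floor_le (s + 2^-1).
set k := Num.floor _ in lo hi *.
have [->|ka] := eqVneq k a; first by rewrite subrr expr0n /= mulr_ge0 ?sqr_ge0.
have : (1 <= k - a) || (k - a <= -1) by lia.
by rewrite -!(ler_int R) intrB /=; case/orP; nra.
Qed.

Section Roundoff.
Variables (R : realType) (n : nat) (delta : R).
Hypothesis delta_gt0 : 0 < delta.

Lemma grid_roundoff (x : 'rV[R]_n) : grid delta (roundoff delta x).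
Proof.
by exists (fun j => Num.floor (x ord0 j / delta + 2^-1)) => j; rewrite mxE.
Qed.

Lemma roundoff_id (x : 'rV[R]_n) : grid delta x -> roundoff delta x = x.
Proof.
move=> [m xE]; apply/rowP => j; rewrite mxE xE; congr (_ * _%:~R).
apply: floor_def; rewrite [delta * _]mulrC mulfK ?gt_eqF // intrD.
by apply/andP; split; lra.
Qed.

Lemma sqdist_roundoff_le (x g : 'rV[R]_n) :
  grid delta g -> sqdist (roundoff delta x) g <= 4 * sqdist x g.
Proof.
move=> [a gE]; rewrite /sqdist mulr_sumr; apply: ler_sum => j _.
rewrite mxE gE -mulrBr.
have -> : x ord0 j - delta * (a j)%:~R = delta * (x ord0 j / delta - (a j)%:~R).
  by rewrite mulrBr mulrCA divff ?mulr1 ?gt_eqF.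
rewrite !exprMn [4 * _]mulrCA ler_wpM2l ?sqr_ge0 //.
by rewrite -intrB; exact: sqr_floor_half_sub_le.
Qed.

Lemma sqdist_roundoff_map_le (w : 'rV[R]_n -> 'rV[R]_n) (lambda : R) o x :
  contraction w lambda -> w o = o -> grid delta o ->
  sqdist (roundoff_map delta w x) o <= 4 * lambda ^+ 2 * sqdist x o.
Proof.
move=> w_contr wo grid_o; apply: le_trans (sqdist_roundoff_le _ grid_o) _.
by rewrite -mulrA ler_wpM2l // -{1}wo contraction_sqdist.
Qed.

Lemma sqdist_grid_ge (x y : 'rV[R]_n) :
  grid delta x -> grid delta y -> x <> y -> delta ^+ 2 <= sqdist x y.
Proof.
move=> [m xE] [a yE] xy.
have [j xyj] : exists j, x ord0 j != y ord0 j.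
  apply/existsP; apply: contra_notT xy => /existsPn xy.
  by apply/rowP => j; apply/eqP; have := xy j; rewrite negbK.
rewrite /sqdist (bigD1 j) //= -[X in X <= _]addr0 lerD ?sumr_ge0 //; last first.
  by move=> i _; rewrite sqr_ge0.
move: xyj; rewrite xE yE -mulrBr -intrB exprMn => xyj.
rewrite -[X in X <= _]mulr1 ler_wpM2l ?sqr_ge0 // sqr_intr_ge1 ?intr_int //.
by rewrite intr_eq0 subr_eq0; apply: contraNneq xyj => ->.
Qed.

End Roundoff.

Lemma iter_descent_reaches (R : archiRealFieldType) (T : Type) (f : T -> T)
    (P : T -> Prop) (o : T) (V : T -> R) (eps : R) :
  0 < eps -> (forall x, P x -> P (f x)) -> (forall x, 0 <= V x) ->
  (forall x, P x -> x <> o -> V (f x) <= V x - eps) ->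
  forall x, P x -> exists N, iter N f x = o.
Proof.
move=> eps_gt0 Pf V_ge0 V_descent.
suff reach k x : P x -> V x < k%:R * eps -> exists N, iter N f x = o.
  move=> x Px; apply: (reach (Num.Def.archi_bound (V x / eps))) => //.
  by rewrite -ltr_pdivrMr // archi_boundP // divr_ge0 // ltW.
elim: k x => [|k IHk] x Px Vx.
  by have := V_ge0 x; rewrite leNgt; move: Vx; rewrite mul0r => ->.
have [->|xo] := pselect (x = o); first by exists 0%N.
have [N fxN] : exists N, iter N f (f x) = o.
  apply: IHk; first exact: Pf.
  by have := V_descent x Px xo; move: Vx; rewrite -natr1 mulrDl mul1r; lra.
by exists N.+1; rewrite iterSr.
Qed.

Lemma minimal_absorbing_fixpoint (R : realType) (n : nat) (delta : R)
    (f : 'rV[R]_n -> 'rV[R]_n) (o : 'rV[R]_n) :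
  grid delta o -> f o = o ->
  (forall x, grid delta x -> exists N, iter N f x = o) ->
  minimal_absorbing delta f = [set o].
Proof.
move=> grid_o fo reach; rewrite eqEsubset; split.
  move=> x /(_ [set o]); apply; split; first by move=> y ->.
  move=> x0 /reach [N fx0N]; exists N => i /subnK <-.
  by rewrite iterD fx0N iter_fix.
move=> _ -> L [_ /(_ o grid_o) [N oL]].
by have := oL N (leqnn N); rewrite iter_fix.
Qed.

Theorem theorem6 (R : realType) (n : nat) (delta lambda : R)
  (w : 'rV[R]_n -> 'rV[R]_n) (o : 'rV[R]_n) :
  0 < delta ->
  contraction w lambda ->
  lambda < 2^-1 ->
  w o = o ->
  grid delta o ->
  minimal_absorbing delta (roundoff_map delta w) = [set o].
Proof.
move=> delta_gt0 w_contr lambda_lt wo grid_o.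
have lambda_ge0 : 0 <= lambda by case: w_contr => /andP[].
have rate_lt1 : 4 * lambda ^+ 2 < 1 by nra.
apply: minimal_absorbing_fixpoint => //.
  by rewrite /roundoff_map wo roundoff_id.
apply: (iter_descent_reaches (V := fun x => sqdist x o)
                             (eps := (1 - 4 * lambda ^+ 2) * delta ^+ 2)).
- by rewrite mulr_gt0 ?exprn_gt0 ?subr_gt0.
- by move=> x _; exact: grid_roundoff.
- by move=> x; exact: sqdist_ge0.
- move=> x grid_x xo; have := sqdist_grid_ge grid_x grid_o xo.
  have := sqdist_roundoff_map_le delta_gt0 x w_contr wo grid_o.
  have := sqdist_ge0 x o; nra.
Qed.
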